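(* Let $a$ and $b$ be coprime odd integers and let $\gamma$ be a positive integer such that $2^\gamma\,\|\,(a+b)$. Then \[G_{(a,b)}(0)\supsetneq G_{(a,b)}(1)\supsetneq G_{(a,b)}(2)\supsetneq\cdots\supsetneq G_{(a,b)}(\gamma)\supsetneq G_{(a,b)}(\gamma+1)=\emptyset.\]
   Context: For coprime nonzero integers $a,b$ and an integer $\beta\geq0$, $G_{(a,b)}(\beta)$ is the set of positive integers $d$ such that $2^\beta d\mid(a^k+b^k)$ for some positive integer $k$. $2^\gamma\,\|\,m$ means $2^\gamma\mid m$ and $2^{\gamma+1}\nmid m$. *)

From mathcomp Require Import all_boot all_algebra.
Set Implicit Arguments. Unset Strict Implicit. Unset Printing Implicit Defensive.
Import GRing.Theory Num.Theory.
Local Open Scope ring_scope.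

Definition G (a b : int) (beta : nat) (d : nat) : Prop :=
  (0 < d)%N /\ exists k : nat, (0 < k)%N /\ ((2 ^+ beta * d%:Z) %| a ^+ k + b ^+ k)%Z.

Definition exactly_divides_pow2 (gamma : nat) (m : int) : Prop :=
  ((2 ^+ gamma : int) %| m)%Z /\ ~ ((2 ^+ gamma.+1 : int) %| m)%Z.

From mathcomp Require Import all_boot all_algebra.
From mathcomp Require Import zify ring.
Import GRing.Theory Num.Theory.
Local Open Scope ring_scope.

(* For odd a, b the 2-adic valuation of a^k + b^k never exceeds that of
   a + b.  For odd k, a^k + b^k = (a + b) S where S is a sum of k odd terms,
   hence odd; for even k, odd squares are 1 mod 4, so a^k + b^k = 2 mod 4.
   Since G(beta)(2^j d) = G(beta + j)(d), the divisor 2^(gamma - i) lies in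
   G(i) but not in G(i + 1), and G(gamma + 1) is empty. *)

Lemma addrXX_odd (R : comPzRingType) (x y : R) n : odd n ->
  x ^+ n + y ^+ n = (x + y) * \sum_(i < n) x ^+ (n.-1 - i) * (- y) ^+ i.
Proof.
move=> n_odd; rewrite -[y in x + y]opprK -subrXX exprNn -signr_odd n_odd.
by rewrite mulN1r opprK.
Qed.

Lemma Euclid_dvdzM (p : nat) (x y : int) : prime p ->
  (p%:Z %| x * y)%Z = (p%:Z %| x)%Z || (p%:Z %| y)%Z.
Proof. by move=> p_prime; rewrite !dvdzE abszM Euclid_dvdM. Qed.

Lemma Euclid_dvdzX (p : nat) (x : int) n : prime p ->
  (p%:Z %| x ^+ n)%Z = (p%:Z %| x)%Z && (0 < n)%N.
Proof. by move=> p_prime; rewrite !dvdzE abszX Euclid_dvdX. Qed.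

Lemma not_dvdz2_subr1P (x : int) : ~ (2 %| x)%Z <-> (2 %| x - 1)%Z.
Proof.
split=> [x_odd | x_sub1_even x_even].
- have r_neq0 : (x %% 2)%Z != 0 by apply: contra_not_neq x_odd => /dvdz_mod0P.
  have r_ge0 := modz_ge0 x (isT : (2 : int) != 0).
  have r_lt2 := ltz_pmod x (isT : (0 : int) < 2).
  have r_eq1 : (x %% 2)%Z = 1 by lia.
  by rewrite -eqz_mod_dvd r_eq1.
- have : (2 %| x - (x - 1))%Z by rewrite rpredB.
  by rewrite opprB addrC subrK.
Qed.

Lemma not_dvdz2_sum_odd (k : nat) (t : 'I_k -> int) : odd k ->
  (forall i, ~ (2 %| t i)%Z) -> ~ (2 %| \sum_(i < k) t i)%Z.
Proof.
move=> k_odd t_odd; apply/not_dvdz2_subr1P.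
have terms_even : (2 %| \sum_(i < k) (t i - 1))%Z.
  by apply: rpred_sum => i _; apply/not_dvdz2_subr1P.
rewrite sumrB sumr_const card_ord in terms_even.
have k_half := odd_halfK k_odd.
have -> : \sum_(i < k) t i - 1 = (\sum_(i < k) t i - 1 *+ k) + k./2%:Z * 2.
  by move: (\sum_(i < k) t i) => s; lia.
by rewrite rpredD // dvdz_mull.
Qed.

Lemma dvdz4_odd_sqr_subr1 (x : int) : ~ (2 %| x)%Z -> (4 %| x ^+ 2 - 1)%Z.
Proof.
move=> /not_dvdz2_subr1P /dvdzP [q x_eq]; apply/dvdzP; exists (q * (q + 1)).
have -> : x = q * 2 + 1 by lia.
by ring.
Qed.

Lemma not_dvdz4_addXX_even (x y : int) n : ~ (2 %| x)%Z -> ~ (2 %| y)%Z ->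
  ~~ odd n -> ~ (4 %| x ^+ n + y ^+ n)%Z.
Proof.
move=> x_odd y_odd n_even dvd4.
have odd_pow z : ~ (2 %| z)%Z -> (4 %| z ^+ n - 1)%Z.
  move=> z_odd; rewrite -(even_halfK n_even) -muln2 exprM.
  apply: dvdz4_odd_sqr_subr1; rewrite (Euclid_dvdzX 2) //.
  by case/andP.
have : (4 %| (x ^+ n + y ^+ n) - (x ^+ n - 1) - (y ^+ n - 1))%Z.
  by rewrite rpredB ?odd_pow // rpredB ?odd_pow.
by have -> : (x ^+ n + y ^+ n) - (x ^+ n - 1) - (y ^+ n - 1) = 2 by ring.
Qed.

Lemma exactly_divides_pow2_odd_cofactor {gamma : nat} {m : int} :
  exactly_divides_pow2 gamma m ->
  exists2 e : int, ~ (2 %| e)%Z & m = 2 ^+ gamma * e.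
Proof.
case=> /dvdzP [e ->] not_dvd_S; exists e; last by rewrite mulrC.
apply: contra_not not_dvd_S => /dvdzP [f ->]; apply/dvdzP; exists f.
by rewrite exprSr; ring.
Qed.

Lemma not_dvdz_pow2S_mul_odd (n : nat) (u : int) :
  ~ (2 %| u)%Z -> ~ (2 ^+ n.+1 %| 2 ^+ n * u)%Z.
Proof. by rewrite exprS [2 ^+ n * u]mulrC dvdz_mul2r // expf_neq0. Qed.

Lemma not_dvdz_pow2S_addXX {a b : int} {gamma : nat} (k : nat) :
  ~ (2 %| a)%Z -> ~ (2 %| b)%Z -> (0 < gamma)%N ->
  exactly_divides_pow2 gamma (a + b) ->
  ~ (2 ^+ gamma.+1 %| a ^+ k + b ^+ k)%Z.
Proof.
move=> a_odd b_odd gamma_gt0 exact_ab.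
have [k_odd | k_even] := boolP (odd k).
- have [e e_odd ab_eq] := exactly_divides_pow2_odd_cofactor exact_ab.
  rewrite addrXX_odd // ab_eq -mulrA; apply: not_dvdz_pow2S_mul_odd.
  rewrite (Euclid_dvdzM 2) // => /orP [] //; apply: not_dvdz2_sum_odd => // i.
  rewrite (Euclid_dvdzM 2) // !(Euclid_dvdzX 2) // rpredN.
  by case/orP => /andP [].
- have dvd4 : (4 %| (2 : int) ^+ gamma.+1)%Z by apply: (@dvdz_exp2l 2 2).
  by move=> /(dvdz_trans dvd4); apply: not_dvdz4_addXX_even.
Qed.

Lemma G_pow2 {a b : int} {beta j d : nat} :
  G a b beta (2 ^ j * d) <-> G a b (beta + j) d.
Proof.
have pow2E : (2 ^+ beta * (2 ^ j * d)%N%:Z : int) = 2 ^+ (beta + j) * d%:Z.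
  by rewrite PoszM -natz natrX exprD mulrA.
by rewrite /G pow2E muln_gt0 expn_gt0.
Qed.

Lemma G_dvd {a b : int} {beta d e : nat} :
  (0 < e)%N -> (e %| d)%N -> G a b beta d -> G a b beta e.
Proof.
move=> e_gt0 e_dvd_d [_ [k [k_gt0 dvd_k]]]; split=> //; exists k; split=> //.
by apply: dvdz_trans dvd_k; apply: dvdz_mul.
Qed.

Lemma G_succ {a b : int} {beta d : nat} : G a b beta.+1 d -> G a b beta d.
Proof.
move=> Gd; apply: (G_dvd Gd.1 (dvdn_mull 2 (dvdnn d))).
by apply/(G_pow2 (j := 1)); rewrite addn1.
Qed.

Theorem corollary2p16 (a b : int) (gamma : nat) :
  coprimez a b -> ~ (2 %| a)%Z -> ~ (2 %| b)%Z ->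
  (0 < gamma)%N -> exactly_divides_pow2 gamma (a + b) ->
  (forall i : nat, (i <= gamma)%N ->
     (forall d : nat, G a b i.+1 d -> G a b i d) /\
     (exists d : nat, G a b i d /\ ~ G a b i.+1 d)) /\
  (forall d : nat, ~ G a b gamma.+1 d).
Proof.
move=> _ a_odd b_odd gamma_gt0 exact_ab.
have G_gammaS_empty d : ~ G a b gamma.+1 d.
  case=> _ [k [_ dvd_k]].
  apply: (not_dvdz_pow2S_addXX k a_odd b_odd gamma_gt0 exact_ab).
  exact: dvdz_trans (dvdz_mulr _ (dvdzz _)) dvd_k.
split=> // i le_i_gamma; split=> [d|]; first exact: G_succ.
exists (2 ^ (gamma - i) * 1)%N; split.
- apply/G_pow2; rewrite subnKC //; split=> //; exists 1%N; split=> //.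
  by rewrite !expr1 mulr1; case: exact_ab.
- by move/G_pow2; rewrite addSn subnKC //; apply: G_gammaS_empty.
Qed.
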